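(* Let $k\ge2$ be an integer, let $g$ be the function (defined in the context) associated with a feasible solution $\bar\pi$, with $\bar\pi_1\ge\dots\ge\bar\pi_p$, of the dual fractional bin packing LP of some 1D bin packing instance with distinct sizes $s_1>\dots>s_p$ in $(0,1]$. For any finite list $L$ of boxes in $[0,1]^3$, writing $W(L)=\sum_{R\in L} f_k(l(R))\,g(w(R))\,h(R)$, we have $W(L)\le T_k\cdot OPT(L)$.
   Context: 3D strip packing: boxes $R=(l(R),w(R),h(R))$ (length, width, height), all sides at most 1, packed orthogonally without rotation or overlap into a strip of length 1, width 1 and unlimited height; $OPT(L)$ is the minimum height needed. Weighting function: $f_k(x)=\frac1t$ if $\frac1{t+1}<x\le\frac1t$ with $1\le t<k$, $f_k(x)=\frac{kx}{k-1}$ if $0<x\le\frac1k$, and $f_k(0)=0$. Let $t_1=1$, $t_{i+1}=t_i(t_i+1)$, $m(k)$ the integer with $t_{m(k)}<k\le t_{m(k)+1}$, and $T_k=\sum_{i=1}^{m(k)}\frac1{t_i}+\frac1{t_{m(k)+1}}\cdot\frac{k}{k-1}$. Dual fractional bin packing LP: for sizes $s_1>\dots>s_p$ with multiplicities $n_j$, a feasible pattern is a nonnegative integer vector $v$ with $\sum_j v_js_j\le1$; the dual is: maximize $\sum_jn_j\pi_j$ s.t. $\sum_jv_j\pi_j\le1$ for all feasible patterns $v$, $\pi\ge0$. Given such a feasible $\bar\pi$ with $\bar\pi_1\ge\dots\ge\bar\pi_p$, set $\bar\pi_{p+1}=0$, $s_0=1$, $s_{p+1}=0$ and $g(0)=0$,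 $g(x)=\bar\pi_j$ for $x\in[s_j,s_{j-1})$, and $g(1)=\bar\pi_1$. *)

From mathcomp Require Import all_boot all_order all_algebra.
From mathcomp Require Import all_classical all_reals.
Set Implicit Arguments. Unset Strict Implicit. Unset Printing Implicit Defensive.
Import Order.TTheory GRing.Theory Num.Theory.
Local Open Scope ring_scope.
Local Open Scope classical_set_scope.

Section Defs.
Variable R : realType.

Definition box := (R * R * R)%type.
Definition bl (b : box) : R := b.1.1.
Definition bw (b : box) : R := b.1.2.
Definition bh (b : box) : R := b.2.

Definition box_in_unit_cube (b : box) : Prop :=
  [/\ 0 <= bl b <= 1, 0 <= bw b <= 1 & 0 <= bh b <= 1].

(* A packing of L into the strip [0,1] x [0,1] x [0,H]: position (x,y,z) of the
   lower corner of each box (indexed by its position in the list), no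
   rotation, boxes inside the strip, interiors pairwise disjoint. *)
Definition packs_in_height (L : seq box) (H : R) : Prop :=
  exists pos : nat -> R * R * R,
    (forall i, (i < size L)%N ->
       let b := nth (0, 0, 0) L i in let q := pos i in
       [/\ (0 <= q.1.1) && (q.1.1 + bl b <= 1),
           (0 <= q.1.2) && (q.1.2 + bw b <= 1) &
           (0 <= q.2) && (q.2 + bh b <= H)]) /\
    (forall i j, (i < size L)%N -> (j < size L)%N -> i != j ->
       let bi := nth (0, 0, 0) L i in let bj := nth (0, 0, 0) L j in
       let qi := pos i in let qj := pos j in
       [|| qi.1.1 + bl bi <= qj.1.1, qj.1.1 + bl bj <= qi.1.1,
           qi.1.2 + bw bi <= qj.1.2, qj.1.2 + bw bj <= qi.1.2,
           qi.2 + bh bi <= qj.2 | qj.2 + bh bj <= qi.2]).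

Definition OPT (L : seq box) : R := inf [set H | packs_in_height L H].

Definition fk (k : nat) (x : R) : R :=
  if x == 0 then 0
  else if (0 < x) && (x <= (k%:R)^-1) then k%:R * x / (k%:R - 1)
  else match [pick t : 'I_k | (0 < (t : nat))%N &&
                   (((t.+1)%:R : R)^-1 < x) && (x <= ((t : nat)%:R : R)^-1)] with
       | Some t => (((t : nat)%:R : R))^-1
       | None => 0
       end.

(* t_1 = 1, t_{i+1} = t_i (t_i + 1); t i is t_i for i >= 1. *)
Fixpoint sylv (n : nat) : nat :=
  match n with 0 => 1 | n'.+1 => sylv n' * (sylv n' + 1) end.
Definition tseq (i : nat) : nat := sylv i.-1.

(* T_k, where m = m(k) is the integer with t_m < k <= t_{m+1}. *)
Definition Tk (k m : nat) : R :=
  \sum_(1 <= i < m.+1) ((tseq i)%:R)^-1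
  + ((tseq m.+1)%:R)^-1 * (k%:R / (k%:R - 1)).

(* Sizes s_1 > ... > s_p and dual values pi_1..pi_p are given as functions
   nat -> R, only indices 1..p being relevant. *)
Definition dual_feasible (p : nat) (s pi : nat -> R) : Prop :=
  (forall j, (1 <= j <= p)%N -> 0 <= pi j) /\
  (forall v : nat -> nat,
     \sum_(1 <= j < p.+1) (v j)%:R * s j <= 1 ->
     \sum_(1 <= j < p.+1) (v j)%:R * pi j <= 1).

Definition sext (p : nat) (s : nat -> R) (j : nat) : R :=
  if j == 0%N then 1 else if (j <= p)%N then s j else 0.
Definition piext (p : nat) (pi : nat -> R) (j : nat) : R :=
  if (1 <= j <= p)%N then pi j else 0.

Definition gfun (p : nat) (s pi : nat -> R) (x : R) : R :=
  if x == 0 then 0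
  else if x == 1 then pi 1%N
  else match [pick j : 'I_p.+2 | (0 < (j : nat))%N &&
                (sext p s j <= x) && (x < sext p s (j : nat).-1)] with
       | Some j => piext p pi j
       | None => 0
       end.

Definition Wgt (k : nat) (g : R -> R) (L : seq box) : R :=
  \sum_(b <- L) fk k (bl b) * g (bw b) * bh b.

End Defs.

From mathcomp Require Import all_boot all_order all_algebra.
From mathcomp Require Import all_classical all_reals.
From mathcomp Require Import ring lra zify.
Set Implicit Arguments. Unset Strict Implicit. Unset Printing Implicit Defensive.
Import Order.TTheory GRing.Theory Num.Theory.
Local Open Scope ring_scope.

(* Following Fekete and Schepers, call u dual feasible when sum u(x_i) <= 1
   whenever sum x_i <= 1. Such a u can be applied to one coordinate of all boxes
   of a packing: moving each box to the largest total u-length of a chain of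
   boxes preceding it gives a packing of the transformed boxes of the same
   height. Both g (LP duality: rounding sizes down to the s_j yields a feasible
   pattern) and f_k / T_k (a greedy argument along the Sylvester sequence t_i)
   are dual feasible, so transforming widths by g and lengths by f_k / T_k turns
   a packing of L of height H into one of volume W(L) / T_k, which is at most H. *)

Section Volume.
Variable R : realType.

Lemma telescope_gap_indicator (zs : seq R) (a b : R) :
  sorted <%R zs -> a \in zs -> b \in zs -> a <= b ->
  \sum_(t < (size zs).-1) (zs`_t.+1 - zs`_t) * ((a <= zs`_t) && (zs`_t.+1 <= b))%:R
  = b - a.
Proof.
move=> szs ain bin ab.
have mono := lt_sorted_leq_nth 0 szs.
have ua : (index a zs < size zs)%N by rewrite index_mem.
have ub : (index b zs < size zs)%N by rewrite index_mem.
rewrite -(nth_index 0 ain) -(nth_index 0 bin).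
rewrite -(nth_index 0 ain) -(nth_index 0 bin) in ab.
move: (index a zs) (index b zs) (size zs) ua ub ab mono => u v N ua ub ab mono.
have uv : (u <= v)%N by rewrite -(mono u v) ?inE.
rewrite -(big_mkord xpredT (fun t => (zs`_t.+1 - zs`_t) *
  ((zs`_u <= zs`_t) && (zs`_t.+1 <= zs`_v))%:R)).
have vN : (v <= N.-1)%N by lia.
rewrite (@big_cat_nat _ _ _ u) ?(leq_trans uv vN) //=.
rewrite (@big_cat_nat _ _ _ v u) //=.
rewrite big1_seq => [|t /andP[_]]; last first.
  rewrite mem_index_iota => /andP[_ tu].
  rewrite mono ?inE; try lia.
  by rewrite leqNgt tu mulr0.
rewrite [\sum_(v <= i < N.-1) _]big1_seq => [|t /andP[_]]; last first.
  rewrite mem_index_iota => /andP[vt tN].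
  rewrite (mono t.+1 v) ?inE; try lia.
  by rewrite (leqNgt t.+1) ltnS vt andbF mulr0.
rewrite add0r addr0 -telescope_sumr //.
apply: eq_big_nat => t /andP[ut tv].
rewrite !mono ?inE; try lia.
by rewrite ut tv mulr1.
Qed.

(* Cut [0, B] at all interval endpoints: on each slice the intervals covering
   it are exactly those containing its midpoint. *)
Lemma sum_mul_length_le (I : finType) (P : pred I) (F x c : I -> R) (B M : R) :
  0 <= B -> 0 <= M ->
  (forall i, P i -> [/\ 0 <= F i, 0 <= c i, 0 <= x i & x i + c i <= B]) ->
  (forall z, \sum_(i | P i && (x i < z < x i + c i)) F i <= M) ->
  \sum_(i | P i) F i * c i <= M * B.
Proof.
move=> B0 M0 hI hz.
pose ends := 0 :: B :: [seq x i | i <- enum P] ++ [seq x i + c i | i <- enum P].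
pose zs := sort <=%R (undup ends).
have szs : sorted <%R zs by rewrite sort_lt_sorted undup_uniq.
have memz y : (y \in zs) = (y \in ends) by rewrite mem_sort mem_undup.
have x_in i : P i -> x i \in zs.
  by move=> Pi; rewrite memz !inE mem_cat map_f ?orbT // mem_enum.
have xc_in i : P i -> x i + c i \in zs.
  by move=> Pi; rewrite memz !inE mem_cat (map_f (fun i => x i + c i)) ?orbT ?mem_enum.
have zs_rng y : y \in zs -> 0 <= y <= B.
  rewrite memz !inE mem_cat => /orP[/eqP->|/orP[/eqP->|/orP[]]]; rewrite ?lexx ?B0 //.
    case/mapP => i; rewrite mem_enum => /hI[_ c0 x0 xcB] ->.
    by rewrite x0 (le_trans _ xcB) // lerDl.
  by case/mapP => i; rewrite mem_enum => /hI[_ c0 x0 xcB] ->; rewrite xcB addr_ge0.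
have zs_succ t : (t < (size zs).-1)%N -> (t.+1 < size zs)%N /\ (t < size zs)%N.
  by case: (size zs) => //= n tn; split; lia.
pose gap t := zs`_t.+1 - zs`_t.
pose covers i t := ((x i <= zs`_t) && (zs`_t.+1 <= x i + c i))%:R : R.
have c_split i : P i -> c i = \sum_(t < (size zs).-1) gap t * covers i t.
  move=> Pi; have [_ c0 _ _] := hI i Pi.
  by rewrite telescope_gap_indicator ?x_in ?xc_in ?lerDl //; lra.
have B_split : B = \sum_(t < (size zs).-1) gap t.
  have B_in : B \in zs by rewrite memz !inE eqxx orbT.
  have z0_in : (0 : R) \in zs by rewrite memz inE eqxx.
  rewrite -[B]subr0 -(@telescope_gap_indicator zs 0 B szs z0_in B_in B0).
  apply: eq_bigr => -[t /= /zs_succ[tN tN']] _.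
  have /andP[-> _] := zs_rng _ (mem_nth 0 tN').
  by have /andP[_ ->] := zs_rng _ (mem_nth 0 tN); rewrite mulr1.
under eq_bigr => i Pi do rewrite (c_split i Pi) mulr_sumr.
rewrite exchange_big B_split mulr_sumr /=; apply: ler_sum => -[t /= /zs_succ[tN tN']] _.
have gap0 : zs`_t < zs`_t.+1 by rewrite (lt_sorted_ltn_nth 0 szs) ?inE.
pose z := (zs`_t + zs`_t.+1) / 2.
apply: (@le_trans _ _ (gap t * \sum_(i | P i && (x i < z < x i + c i)) F i)).
  rewrite mulr_sumr big_mkcondr /=; apply: ler_sum => i Pi.
  have [F0 _ _ _] := hI i Pi.
  rewrite /covers; case: ifP => hzi.
    by rewrite mulrCA ler_pM2l ?subr_gt0 //; case: (_ && _); rewrite ?mulr1 ?mulr0.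
  case: andP => [[h1 h2]|]; last by rewrite !mulr0.
  by move: hzi; rewrite /z; case: andP => //; case; split; lra.
by rewrite mulrC ler_wpM2r ?hz // subr_ge0 ltW.
Qed.

Lemma sum1_uniq_le1 (I : finType) (Q : pred I) :
  (forall i j, Q i -> Q j -> i = j) -> \sum_(i | Q i) (1 : R) <= 1.
Proof.
move=> hQ; case: (pickP Q) => [i Qi|Q0]; last by rewrite big_pred0.
rewrite (bigD1 i) //= big_pred0 ?addr0 // => j.
by apply/negbTE/negP => /andP[Qj /eqP]; apply; apply: hQ.
Qed.

Lemma packing_volume_le (L : seq (box R)) (H : R) :
  packs_in_height L H -> 0 <= H ->
  (forall b, b \in L -> [/\ 0 <= bl b, 0 <= bw b & 0 <= bh b]) ->
  \sum_(b <- L) bl b * bw b * bh b <= H.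
Proof.
case=> pos [hin hsep] H0 hL.
rewrite (big_nth (0, 0, 0)) big_mkord.
pose nb (i : 'I_(size L)) := nth (0, 0, 0) L i.
have hnb (i : 'I_(size L)) := hL _ (mem_nth (0, 0, 0) (ltn_ord i)).
have hi (i : 'I_(size L)) := hin i (ltn_ord i).
rewrite -[H]mul1r.
apply: (@sum_mul_length_le _ predT (fun i => bl (nb i) * bw (nb i))
  (fun i => (pos i).2)) => // [i _|z].
  have [l0 w0 h0] := hnb i; have /= [_ _ /andP[z0 zH]] := hi i.
  by split; rewrite ?mulr_ge0.
rewrite -[1]mulr1.
apply: (@sum_mul_length_le _ _ (fun i => bl (nb i)) (fun i => (pos i).1.2))
  => // [i _|y].
  by have [l0 w0 _] := hnb i; have /= [_ /andP[y0 y1] _] := hi i.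
rewrite -[1]mulr1; under eq_bigr do rewrite -[bl _]mul1r.
apply: (@sum_mul_length_le _ _ (fun _ => 1) (fun i : 'I_(size L) => (pos i).1.1))
  => // [i _|w].
  by have [l0 _ _] := hnb i; have /= [/andP[x0 x1] _ _] := hi i.
apply: sum1_uniq_le1 => i j.
move=> /andP[/andP[/andP[_ /andP[zi1 zi2]] /andP[yi1 yi2]] /andP[xi1 xi2]].
move=> /andP[/andP[/andP[_ /andP[zj1 zj2]] /andP[yj1 yj2]] /andP[xj1 xj2]].
apply/eqP/negPn/negP => ij; move: (hsep i j (ltn_ord i) (ltn_ord j) ij) => /=.
by case/orP=> [|/orP[|/orP[|/orP[|/orP[]]]]] h; lra.
Qed.

End Volume.

Definition dual_feasible_fun (R : realType) (u : R -> R) :=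
  forall (I : finType) (S : pred I) (x : I -> R),
    (forall i, S i -> 0 <= x i) ->
    \sum_(i | S i) x i <= 1 -> \sum_(i | S i) u (x i) <= 1.

Section Relayout.
Variables (R : realType) (u : R -> R) (N : nat) (X l : nat -> R).
Hypotheses (u0 : u 0 = 0) (u_dff : dual_feasible_fun u).
Hypothesis l_ge0 : forall i, (i < N)%N -> 0 <= l i.
Hypothesis X_fit : forall i, (i < N)%N -> 0 <= X i /\ X i + l i <= 1.

Definition chain (S : {set 'I_N}) :=
  [forall s in S, forall t in S, [|| s == t, X s + l s <= X t | X t + l t <= X s]].

Definition before (S : {set 'I_N}) (i : nat) := [forall s in S, X s + l s <= X i].

Definition relayout (i : nat) : R :=
  \big[Order.max/0]_(S : {set 'I_N} | chain S && before S i) \sum_(s in S) u (l s).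

Lemma chain_sum_le1 S : chain S -> \sum_(s in S) u (l s) <= 1.
Proof.
move=> /forall_inP hS; apply: u_dff => [s _|]; first exact: l_ge0.
rewrite -[1]mulr1; under eq_bigr do rewrite -[l _]mul1r.
apply: (@sum_mul_length_le _ _ _ (fun _ => 1) (fun s : 'I_N => X s)) => // [s _|z].
  by have [X0 Xl] := X_fit (ltn_ord s); split; rewrite ?l_ge0.
apply: sum1_uniq_le1 => s t /andP[sS /andP[s1 s2]] /andP[tS /andP[t1 t2]].
by have /forall_inP/(_ t tS)/orP[/eqP //|/orP[] h] := hS s sS; exfalso; lra.
Qed.

Lemma chainU1 S (i : 'I_N) : chain S -> before S i -> chain (i |: S).
Proof.
move=> /forall_inP hS /forall_inP hi; apply/forall_inP => s; rewrite in_setU1.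
case/orP => [/eqP->|sS]; apply/forall_inP => t; rewrite in_setU1.
  by case/orP => [/eqP->|tS]; rewrite ?eqxx // hi ?orbT.
by case/orP => [/eqP->|tS]; [rewrite hi ?orbT | have /forall_inP := hS s sS; apply].
Qed.

(* If [i] already belongs to [S], being before [S] forces [l i = 0]. *)
Lemma sum_setU1_before S (i : 'I_N) :
  before S i -> \sum_(s in S) u (l s) + u (l i) <= \sum_(s in i |: S) u (l s).
Proof.
move=> /forall_inP hi; case: (boolP (i \in S)) => iS; last by rewrite big_setU1 //= addrC.
have li0 : l i = 0 by have := hi i iS; have := l_ge0 (ltn_ord i); lra.
have -> : i |: S = S by apply/finset.setUidPr; rewrite finset.sub1set.
by rewrite li0 u0 addr0.
Qed.

Lemma dff_le1 i : (i < N)%N -> u (l i) <= 1.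
Proof.
move=> iN; have := @u_dff _ (pred1 (Ordinal iN)) (fun s : 'I_N => l s).
rewrite !big_pred1_eq; apply=> [s /eqP->|]; first exact: l_ge0.
by have [] := X_fit iN; lra.
Qed.

Lemma relayout_ge0 i : 0 <= relayout i.
Proof. exact: bigmax_ge_id. Qed.

Lemma relayout_fit i : (i < N)%N -> relayout i + u (l i) <= 1.
Proof.
move=> iN; rewrite -lerBrDr; apply: bigmax_le => [|S /andP[hS hi]].
  by rewrite subr_ge0 dff_le1.
rewrite lerBrDr; apply: le_trans (sum_setU1_before (i := Ordinal iN) hi) _.
exact/chain_sum_le1/chainU1.
Qed.

Lemma relayout_mono i j : (i < N)%N -> X i + l i <= X j ->
  relayout i + u (l i) <= relayout j.
Proof.
move=> iN hij; pose i' := Ordinal iN.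
have beforeU1 S : before S i -> before (i' |: S) j.
  move=> /forall_inP hi; apply/forall_inP => s; rewrite in_setU1.
  case/orP => [/eqP -> //|sS]; have := hi s sS; have := l_ge0 iN.
  by move: (X s) (l s) (X i) (l i) (X j) hij => a b c d e; lra.
have chain0 : chain finset.set0 by apply/forall_inP => s; rewrite inE.
have before0 : before finset.set0 i by apply/forall_inP => s; rewrite inE.
rewrite -lerBrDr; apply: bigmax_le => [|S /andP[hS hi]].
  rewrite subr_ge0; have := sum_setU1_before (i := i') before0; rewrite big_set0 add0r.
  by move/le_trans; apply; apply: le_bigmax_cond; rewrite chainU1 ?beforeU1.
rewrite lerBrDr; apply: le_trans (sum_setU1_before (i := i') hi) _.
by apply: le_bigmax_cond; rewrite chainU1 ?beforeU1.
Qed.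

End Relayout.

Section Packings.
Variable R : realType.
Implicit Types (L : seq (box R)) (H : R).

Lemma packs_nil H : packs_in_height [::] H.
Proof. by exists (fun _ => (0, 0, 0)); split. Qed.

Lemma packs_height_ge0 L H : L != [::] -> (forall b, b \in L -> 0 <= bh b) ->
  packs_in_height L H -> 0 <= H.
Proof.
case: L => [//|b L] _ hL [pos [hin _]].
have /= [_ _ /andP[z0 zH]] := hin 0%N erefl.
by apply: le_trans zH; rewrite addr_ge0 // hL ?mem_head.
Qed.

Lemma packs_stack L : (forall b, b \in L -> box_in_unit_cube b) ->
  packs_in_height L (\sum_(b <- L) bh b).
Proof.
move=> hL.
have h0 b : b \in L -> 0 <= bh b by move/hL => [_ _ /andP[]].
pose z j := \sum_(b <- take j L) bh b.
have z_ge0 j : 0 <= z j by rewrite /z big_seq sumr_ge0 // => b /mem_take /h0.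
have z_mono i j : (i <= j)%N -> z i <= z j.
  move=> ij; rewrite /z -(cat_take_drop i (take j L)) big_cat /= take_takel //.
  by rewrite lerDl big_seq sumr_ge0 // => b /mem_drop/mem_take /h0.
have zS j : (j < size L)%N -> z j.+1 = z j + bh (nth (0, 0, 0) L j).
  by move=> jL; rewrite /z (take_nth (0, 0, 0)) // big_rcons.
have z_tot : z (size L) = \sum_(b <- L) bh b by rewrite /z take_size.
exists (fun j => (0, 0, z j)); split.
  move=> j jL /=; have [/andP[_ l1] /andP[_ w1] _] := hL _ (mem_nth (0, 0, 0) jL).
  by rewrite lexx !add0r l1 w1 z_ge0 -zS // -z_tot z_mono.
move=> i j iL jL ij /=.
case: (ltngtP i j) ij => [lt|lt|_]; last by [].
  by rewrite -(zS i) // z_mono ?orbT.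
by rewrite -(zS j) // z_mono ?orbT.
Qed.

Definition swap_lw (b : box R) : box R := (bw b, bl b, bh b).

Lemma packs_swap_lw L H : packs_in_height L H -> packs_in_height (map swap_lw L) H.
Proof.
case=> pos [hin hsep]; exists (fun j => ((pos j).1.2, (pos j).1.1, (pos j).2)).
split=> [j|i j]; rewrite size_map.
  by move=> jL; rewrite (nth_map (0, 0, 0)) //=; have /= [-> -> ->] := hin j jL.
move=> iL jL ij; rewrite !(nth_map (0, 0, 0)) //=.
have /= := hsep i j iL jL ij.
by case/orP=> [->|/orP[->|/orP[->|/orP[->|/orP[->|->]]]]]; rewrite ?orbT.
Qed.

Lemma packs_dff_length (u : R -> R) L H :
  u 0 = 0 -> dual_feasible_fun u -> (forall b, b \in L -> 0 <= bl b) ->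
  packs_in_height L H -> packs_in_height [seq (u (bl b), bw b, bh b) | b <- L] H.
Proof.
move=> u0 u_dff hL [pos [hin hsep]].
pose X j := (pos j).1.1; pose l j := bl (nth (0, 0, 0) L j).
have l_ge0 j : (j < size L)%N -> 0 <= l j by move=> jL; rewrite hL ?mem_nth.
have X_fit j : (j < size L)%N -> 0 <= X j /\ X j + l j <= 1.
  by move=> jL; have /= [/andP[]] := hin j jL.
exists (fun j => (relayout u (size L) X l j, (pos j).1.2, (pos j).2)).
split=> [j|i j]; rewrite size_map.
  move=> jL; rewrite (nth_map (0, 0, 0)) //=; have /= [_ -> ->] := hin j jL.
  by rewrite relayout_ge0 (relayout_fit u0 u_dff l_ge0 X_fit jL).
move=> iL jL ij; rewrite !(nth_map (0, 0, 0)) //=.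
have /= := hsep i j iL jL ij.
case/orP => [h|/orP[h|->]]; last by rewrite !orbT.
  by rewrite (relayout_mono u0 l_ge0 iL h).
by rewrite (relayout_mono u0 l_ge0 jL h) orbT.
Qed.

Lemma dff_volume_le_height (u v : R -> R) L H :
  u 0 = 0 -> dual_feasible_fun u -> (forall x, 0 <= u x) ->
  v 0 = 0 -> dual_feasible_fun v -> (forall x, 0 <= v x) ->
  (forall b, b \in L -> box_in_unit_cube b) -> L != [::] ->
  packs_in_height L H -> \sum_(b <- L) u (bl b) * v (bw b) * bh b <= H.
Proof.
move=> u0 u_dff u_ge0 v0 v_dff v_ge0 hL L0 hLH.
have H0 : 0 <= H by apply: packs_height_ge0 L0 _ hLH => b /hL[_ _ /andP[]].
have w_ge0 b : b \in map swap_lw L -> 0 <= bl b.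
  by case/mapP=> b' /hL[_ /andP[w0 _] _] ->.
have hLv : packs_in_height [seq (bl b, v (bw b), bh b) | b <- L] H.
  have := packs_swap_lw (packs_dff_length v0 v_dff w_ge0 (packs_swap_lw hLH)).
  by rewrite -!map_comp; under eq_map => -[[x y] z] do [].
have l_ge0 b : b \in [seq (bl b, v (bw b), bh b) | b <- L] -> 0 <= bl b.
  by case/mapP=> b' /hL[/andP[l0 _] _ _] ->.
have := packs_dff_length u0 u_dff l_ge0 hLv; rewrite -map_comp => hLuv.
have := packing_volume_le hLuv H0; rewrite big_map /=; apply.
by move=> _ /mapP[b /hL[_ _ /andP[h0 _]] ->]; split; [exact: u_ge0 | exact: v_ge0 |].
Qed.

End Packings.

Lemma tseq_gt0 j : (0 < tseq j)%N.
Proof. by rewrite /tseq; elim: j.-1 => //= n IH; rewrite muln_gt0 IH addn1. Qed.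

Lemma tseqS j : (1 <= j)%N -> tseq j.+1 = (tseq j * (tseq j + 1))%N.
Proof. by case: j. Qed.

Lemma tseq_mono : {homo tseq : i j / (i <= j)%N}.
Proof.
apply: homo_leq => [//|y x z|[|j] //]; first exact: leq_trans.
by rewrite /tseq /= leq_pmulr // addn1.
Qed.

Section WeightingFunction.
Variables (R : realType) (k : nat).
Hypothesis k_ge2 : (2 <= k)%N.

Lemma ler_invn (a b : nat) : (0 < a)%N -> (a <= b)%N -> (b%:R : R)^-1 <= (a%:R)^-1.
Proof. by move=> a0 ab; rewrite lef_pV2 ?ler_nat // posrE ltr0n //; lia. Qed.

Lemma ltr_invn (a b : nat) : (0 < a)%N -> (0 < b)%N ->
  ((b%:R : R)^-1 < (a%:R)^-1) = (a < b)%N.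
Proof. by move=> a0 b0; rewrite ltf_pV2 ?ltr_nat // posrE ltr0n. Qed.

Lemma k_sub1_gt0 : 0 < (k%:R : R) - 1.
Proof. have : (2%:R : R) <= k%:R by rewrite ler_nat. lra. Qed.

Lemma ler_sum_term (I : finType) (S : pred I) (x : I -> R) i :
  (forall l, S l -> 0 <= x l) -> S i -> x i <= \sum_(l | S l) x l.
Proof.
by move=> x0 Si; rewrite (bigD1 i Si) /= lerDl sumr_ge0 // => l /andP[/x0].
Qed.

Lemma tseq_inv_sub j : (1 <= j)%N ->
  (tseq j)%:R^-1 - (tseq j).+1%:R^-1 = (tseq j.+1)%:R^-1 :> R.
Proof.
move=> j1; have := tseq_gt0 j; rewrite tseqS // natrM -natr1 natrD.
by rewrite -(ltr0n R) => a0; field; rewrite !lt0r_neq0 //; lra.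
Qed.

Lemma fk_ge0 (x : R) : 0 <= fk k x.
Proof.
have := k_sub1_gt0; rewrite /fk; case: eqP => // _ k1.
case: ifP => [/andP[x0 _]|_].
  by rewrite divr_ge0 ?mulr_ge0 ?ler0n ?(ltW x0) ?(ltW k1).
by case: pickP => // t _; rewrite invr_ge0.
Qed.

Lemma fk_small (x : R) : 0 <= x <= k%:R^-1 -> fk k x <= k%:R * x / (k%:R - 1).
Proof.
have k1 := k_sub1_gt0; move=> /andP[x0 xk].
rewrite /fk; case: eqP => [->|_]; first by rewrite mulr0 mul0r.
case: ifP => // _; case: pickP => [t /andP[/andP[_ xt] _]|_]; last first.
  by rewrite divr_ge0 ?mulr_ge0 ?ler0n ?(ltW k1).
by have := lt_le_trans xt (le_trans xk (ler_invn (ltn0Sn t) (ltn_ord t))); rewrite ltxx.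
Qed.

Lemma fk_mid (a : nat) (x : R) : (1 <= a < k)%N ->
  a.+1%:R^-1 < x -> x <= a%:R^-1 -> fk k x <= a%:R^-1.
Proof.
move=> /andP[a1 ak] xa1 xa.
have hak : (k%:R : R)^-1 <= a.+1%:R^-1 by apply: ler_invn.
rewrite /fk; case: eqP => [_|_]; first by rewrite invr_ge0.
case: ifP => [/andP[_ xk]|_].
  by have := lt_le_trans xa1 (le_trans xk hak); rewrite ltxx.
case: pickP => [t /andP[/andP[t0 xt1] xt]|_]; last by rewrite invr_ge0.
apply: ler_invn => //.
by have := lt_le_trans xt1 xa; rewrite ltr_invn //; lia.
Qed.

(* On [(1 / (t + 1), 1 / t]], [f_k x = 1 / t <= (1 + 1 / t) x]. *)
Lemma fk_le_linear (a : nat) (D x : R) :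
  1 + a.+1%:R^-1 <= D -> k%:R / (k%:R - 1) <= D ->
  0 <= x <= a.+1%:R^-1 -> fk k x <= D * x.
Proof.
move=> D1 D2 /andP[x0 xa]; have k1 := k_sub1_gt0.
have D0 : 0 <= D by apply: le_trans D2; rewrite divr_ge0 ?ler0n ?ltW.
rewrite /fk; case: eqP => [->|_]; first by rewrite mulr0.
case: ifP => [/andP[_ xk]|_]; first by rewrite mulrAC ler_wpM2r.
case: pickP => [t /andP[/andP[t0 xt1] _]|_]; last by rewrite mulr_ge0.
have tp : (0 : R) < t%:R by rewrite ltr0n.
have -> : (t%:R : R)^-1 = (1 + t%:R^-1) * t.+1%:R^-1.
  by rewrite -natr1; field; rewrite natr1 !lt0r_neq0 ?ltr0n.
apply: le_trans (_ : (1 + t%:R^-1) * x <= _).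
  by rewrite ler_wpM2l ?ltW // addr_gt0 // invr_gt0.
apply: ler_wpM2r => //; apply: le_trans D1; rewrite lerD2l ler_invn //.
by rewrite -ltnS -(@ltr_invn a.+1 t.+1) // (lt_le_trans xt1 xa).
Qed.

Variable m : nat.
Hypothesis k_tseq : (tseq m < k <= tseq m.+1)%N.

Definition Ttail (j : nat) : R :=
  \sum_(j <= i < m.+1) (tseq i)%:R^-1 + (tseq m.+1)%:R^-1 * (k%:R / (k%:R - 1)).

Lemma Ttail1 : Ttail 1 = Tk R k m.
Proof. by []. Qed.

Lemma k_div_k_sub1_ge1 : 1 <= (k%:R : R) / (k%:R - 1).
Proof. by have k1 := k_sub1_gt0; rewrite ler_pdivlMr // mul1r; lra. Qed.

Lemma Ttail_ge0 j : 0 <= Ttail j.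
Proof.
rewrite addr_ge0 ?sumr_ge0 // => [i _|]; first by rewrite invr_ge0.
by rewrite mulr_ge0 ?invr_ge0 // (le_trans _ k_div_k_sub1_ge1).
Qed.

Lemma TtailS j : (j <= m)%N -> Ttail j = (tseq j)%:R^-1 + Ttail j.+1.
Proof. by move=> jm; rewrite /Ttail big_ltn ?ltnS // addrA. Qed.

Lemma Ttail_last : Ttail m.+1 = (tseq m.+1)%:R^-1 * (k%:R / (k%:R - 1)).
Proof. by rewrite /Ttail big_geq // add0r. Qed.

Lemma Ttail_ge j : (j <= m.+1)%N -> (tseq j)%:R^-1 <= Ttail j.
Proof.
rewrite leq_eqVlt ltnS => /orP[/eqP->|jm].
  by rewrite Ttail_last ler_pMr ?k_div_k_sub1_ge1 // invr_gt0 ltr0n tseq_gt0.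
by rewrite TtailS // lerDl Ttail_ge0.
Qed.

Lemma fk_sum_le_Ttail_last (I : finType) (S : pred I) (x : I -> R) :
  (forall i, S i -> 0 <= x i) -> \sum_(i | S i) x i <= (tseq m.+1)%:R^-1 ->
  \sum_(i | S i) fk k (x i) <= Ttail m.+1.
Proof.
move=> x0 hx; have k1 := k_sub1_gt0; have k_le : (k <= tseq m.+1)%N by case/andP: k_tseq.
apply: (@le_trans _ _ (\sum_(i | S i) k%:R * x i / (k%:R - 1))).
  apply: ler_sum => i Si; rewrite fk_small // x0 //=.
  apply: le_trans (ler_invn _ k_le); last by lia.
  exact: le_trans (ler_sum_term x0 Si) hx.
under eq_bigr do rewrite mulrAC.
by rewrite -mulr_sumr Ttail_last mulrC ler_wpM2r // ?divr_ge0 ?ler0n ?ltW.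
Qed.

Lemma Ttail_slope j : (1 <= j <= m)%N ->
  1 + (tseq j).+1%:R^-1 <= (tseq j)%:R * Ttail j /\
  k%:R / (k%:R - 1) <= (tseq j)%:R * Ttail j.
Proof.
move=> /andP[j1 jm]; have k1 := k_sub1_gt0.
have a1 : (0 < tseq j)%N := tseq_gt0 j.
have ak : (tseq j < k)%N by have := tseq_mono jm; case/andP: k_tseq; lia.
have tS := tseqS j1; set a := tseq j in a1 ak tS *.
have A1 : (1 : R) <= a%:R by rewrite ler1n.
have -> : a%:R * Ttail j = 1 + a%:R * Ttail j.+1.
  by rewrite TtailS // mulrDr mulfV // lt0r_neq0 //; lra.
have tail_ge : (tseq j.+1)%:R^-1 <= Ttail j.+1 by apply: Ttail_ge; rewrite ltnS.
rewrite tS natrM natrD in tail_ge.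
have slope1 : a.+1%:R^-1 <= a%:R * Ttail j.+1.
  apply: le_trans (ler_wpM2l (ler0n _ _) tail_ge); rewrite -natr1.
  by rewrite le_eqVlt; apply/orP; left; apply/eqP; field; rewrite !lt0r_neq0 //; lra.
split; first by rewrite lerD2l.
have -> : (k%:R : R) / (k%:R - 1) = 1 + (k%:R - 1)^-1 by field; rewrite lt0r_neq0.
rewrite lerD2l; case: (ltnP j m) => [jm'|mj].
  apply: le_trans slope1; rewrite lef_pV2 ?posrE ?ltr0n //.
  have : (a.+2 <= k)%N by have := tseq_mono jm'; rewrite tS; case/andP: k_tseq; nia.
  by rewrite -(ler_nat R) -natr1; lra.
have mj' : m = j by apply/eqP; rewrite eqn_leq mj.
rewrite -mj' Ttail_last mj' tS natrM natrD -subr_ge0.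
have -> : a%:R * ((a%:R * (a%:R + 1))^-1 * (k%:R / (k%:R - 1))) - (k%:R - 1)^-1
    = (k%:R - (a%:R + 1)) / ((a%:R + 1) * (k%:R - 1)) :> R.
  by field; rewrite !lt0r_neq0 //; lra.
have : ((a + 1)%:R : R) <= k%:R by rewrite ler_nat addn1.
by rewrite natrD => ?; rewrite divr_ge0 ?mulr_ge0 //; lra.
Qed.

Lemma fk_sum_le_Ttail_small j (I : finType) (S : pred I) (x : I -> R) :
  (1 <= j <= m)%N -> (forall i, S i -> 0 <= x i <= (tseq j).+1%:R^-1) ->
  \sum_(i | S i) x i <= (tseq j)%:R^-1 -> \sum_(i | S i) fk k (x i) <= Ttail j.
Proof.
move=> hj hx hsum; have [D1 D2] := Ttail_slope hj.
have a0 : (0 : R) < (tseq j)%:R by rewrite ltr0n tseq_gt0.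
apply: le_trans (_ : \sum_(i | S i) (tseq j)%:R * Ttail j * x i <= _).
  by apply: ler_sum => i /hx; apply: fk_le_linear.
have D0 : 0 <= (tseq j)%:R * Ttail j by rewrite mulr_ge0 ?ler0n ?Ttail_ge0.
rewrite -mulr_sumr; apply: le_trans (ler_wpM2l D0 hsum) _.
by rewrite mulrAC mulfV ?mul1r // lt0r_neq0.
Qed.

(* Greedy induction from [j = m + 1] down: an item larger than [1 / (t_j + 1)]
   weighs at most [1 / t_j] and leaves room [1 / t_j - 1 / (t_j + 1) = 1 / t_(j+1)]
   for the others; without such an item, [fk_le_linear] applies. *)
Lemma fk_sum_le_Ttail j (I : finType) (S : pred I) (x : I -> R) :
  (1 <= j <= m.+1)%N -> (forall i, S i -> 0 <= x i) ->
  \sum_(i | S i) x i <= (tseq j)%:R^-1 -> \sum_(i | S i) fk k (x i) <= Ttail j.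
Proof.
move=> /andP[j1 jm]; move: {2}(m.+1 - j)%N (erefl (m.+1 - j)%N) => n.
elim: n j j1 jm I S x => [|n IH] j j1 jm I S x en x0 hx.
  have ej : j = m.+1 by lia.
  by rewrite ej in hx *; apply: fk_sum_le_Ttail_last.
have jm' : (j <= m)%N by lia.
have ak : (tseq j < k)%N by have := tseq_mono jm'; case/andP: k_tseq; lia.
case: (pickP (fun i => S i && ((tseq j).+1%:R^-1 < x i))) => [i /andP[Si xi]|small].
  have xs := ler_sum_term x0 Si.
  rewrite (bigD1 i Si) TtailS //=; apply: lerD.
    by apply: fk_mid; rewrite ?tseq_gt0 ?ak //; apply: le_trans xs hx.
  apply: (IH j.+1); try lia; first by move=> l /andP[/x0].
  rewrite -tseq_inv_sub //; move: hx; rewrite (bigD1 i Si) /=.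
  by move: (\sum_(l | _) _) => r h; rewrite lerBrDr addrC (le_trans _ h) // lerD2r ltW.
apply: fk_sum_le_Ttail_small => [|i Si|//]; first by rewrite j1.
by have := small i; rewrite Si x0 //= => /negbT; rewrite -leNgt.
Qed.

Lemma Tk_gt0 : 0 < Tk R k m.
Proof.
rewrite -Ttail1; apply: lt_le_trans (Ttail_ge _); last by lia.
by rewrite invr_gt0 ltr0n tseq_gt0.
Qed.

Lemma fk_div_Tk_dff : dual_feasible_fun (fun x => fk k x / Tk R k m).
Proof.
move=> I S x x0 hx; rewrite -mulr_suml ler_pdivrMr ?Tk_gt0 // mul1r -Ttail1.
by apply: fk_sum_le_Ttail; rewrite /tseq ?invr1.
Qed.

End WeightingFunction.

Lemma sum_indicator_nat (R : realType) (q c : nat) (a : nat -> R) :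
  \sum_(1 <= j < q.+1) (c == j)%:R * a j = if (1 <= c <= q)%N then a c else 0.
Proof.
elim: q => [|q IH]; first by rewrite big_geq //; case: c => [|[]].
rewrite big_nat_recr //= IH; case: (c =P q.+1) => [->|neq].
  by rewrite mul1r ltnn andbF add0r leqnn.
by rewrite mul0r addr0; case: ifP => h1; case: ifP => h2 //; exfalso; lia.
Qed.

Section DualFunction.
Variables (R : realType) (p : nat) (s pi : nat -> R).
Hypothesis p_ge1 : (1 <= p)%N.
Hypothesis s_range : forall j, (1 <= j <= p)%N -> 0 < s j <= 1.
Hypothesis pi_feasible : dual_feasible p s pi.

Definition gindex (x : R) : nat :=
  if x == 0 then 0%N
  else if x == 1 then 1%N
  else match [pick j : 'I_p.+2 | (0 < (j : nat))%N &&
                (sext p s j <= x) && (x < sext p s (j : nat).-1)] with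
       | Some j => if (j <= p)%N then (j : nat) else 0%N
       | None => 0%N
       end.

Lemma gfunE x : gfun p s pi x = piext p pi (gindex x).
Proof.
rewrite /gfun /gindex; case: eqP => _; first by rewrite /piext.
case: eqP => _; first by rewrite /piext p_ge1.
case: pickP => [j _|_]; last by rewrite /piext.
by case: ifP => // jp; rewrite /piext jp andbF.
Qed.

Lemma s_gindex_le x : (1 <= gindex x <= p)%N -> s (gindex x) <= x.
Proof.
rewrite /gindex; case: eqP => // _; case: eqP => [->|_] hj.
  by case/andP: (s_range hj).
move: hj; case: pickP => [j /andP[/andP[j0 hj] _]|_] //.
by case: ifP => // jp _; move: hj; rewrite /sext jp; case: eqP => // jz; rewrite jz in j0.
Qed.

Lemma gfun_ge0 x : 0 <= gfun p s pi x.
Proof. by rewrite gfunE /piext; case: ifP => // /pi_feasible.1. Qed.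

Lemma gfun0 : gfun p s pi 0 = 0.
Proof. by rewrite /gfun eqxx. Qed.

(* Rounding every size [x] down to [s_(gindex x)] gives a feasible pattern,
   whose value under [pi] is the [g]-sum. *)
Lemma gfun_dff : dual_feasible_fun (gfun p s pi).
Proof.
move=> I S x x0 hx.
pose v j := (\sum_(i | S i) (gindex (x i) == j))%N.
have pattern_sum (a : nat -> R) : \sum_(1 <= j < p.+1) (v j)%:R * a j =
    \sum_(i | S i) (if (1 <= gindex (x i) <= p)%N then a (gindex (x i)) else 0).
  under eq_bigr do rewrite natr_sum mulr_suml.
  by rewrite exchange_big; apply: eq_bigr => i _; rewrite sum_indicator_nat.
under eq_bigr do rewrite gfunE.
have := pi_feasible.2 v; rewrite !pattern_sum; apply.
apply: le_trans hx; apply: ler_sum => i Si.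
by case: ifP => [/s_gindex_le|_]; last exact: x0.
Qed.

End DualFunction.

Lemma Wgt_le_Tk_height (R : realType) (k m p : nat) (s pi : nat -> R)
    (L : seq (box R)) (H : R) :
  (2 <= k)%N -> (tseq m < k <= tseq m.+1)%N -> (1 <= p)%N ->
  (forall j, (1 <= j <= p)%N -> 0 < s j <= 1) -> dual_feasible p s pi ->
  (forall b, b \in L -> box_in_unit_cube b) -> L != [::] ->
  packs_in_height L H -> Wgt k (gfun p s pi) L <= Tk R k m * H.
Proof.
move=> k2 hkm p1 srng hdf hL L0 hLH; have T0 := Tk_gt0 R k2 hkm.
rewrite /Wgt -ler_pdivrMl // mulr_sumr.
under eq_bigr do rewrite !mulrA [_^-1 * _]mulrC.
apply: (dff_volume_le_height (u := fun x => fk k x / Tk R k m) (v := gfun p s pi)) => //.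
- by rewrite /fk eqxx mul0r.
- exact: fk_div_Tk_dff.
- by move=> x; rewrite divr_ge0 ?fk_ge0 ?ltW.
- exact: gfun0.
- exact: gfun_dff.
- exact: gfun_ge0.
Qed.

Theorem lemma7 (R : realType) (k m : nat) (p : nat) (s pi : nat -> R)
  (L : seq (box R)) :
  (2 <= k)%N ->
  (1 <= m)%N -> (tseq m < k <= tseq m.+1)%N ->
  (1 <= p)%N ->
  (forall j, (1 <= j < p)%N -> s j.+1 < s j) ->
  (forall j, (1 <= j <= p)%N -> 0 < s j <= 1) ->
  dual_feasible p s pi ->
  (forall j, (1 <= j < p)%N -> pi j.+1 <= pi j) ->
  (forall b, b \in L -> box_in_unit_cube b) ->
  Wgt k (gfun p s pi) L <= Tk R k m * OPT L.
Proof.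
move=> k2 _ hkm p1 _ srng hdf _ hL.
have T0 := Tk_gt0 R k2 hkm.
have [->|L0] := eqVneq L [::].
  (* [[::]] packs in every height, so [OPT [::]] is the junk value [inf setT = 0]. *)
  rewrite /Wgt big_nil /OPT inf_out ?mulr0 // => -[_ [lb hlb]].
  by have := hlb (lb - 1) (packs_nil _); lra.
rewrite /OPT -ler_pdivrMl //; apply: lb_le_inf.
  by exists (\sum_(b <- L) bh b); apply: packs_stack.
by move=> H hLH; rewrite ler_pdivrMl //; apply: Wgt_le_Tk_height.
Qed.
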